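(* Let $H$ be a finite abelian group of odd order $d$, where $d$ has no divisor congruent to $3\bmod 4$, and let $\lambda:H\times H\to\mathbb{Q}/\mathbb{Z}$ be a non-degenerate symmetric bilinear form. Let $\Lambda_0=\{g\in H:\lambda(g,g)=0\}$. Then $\Lambda_0=\{0\}$ if and only if $H\cong\mathbb{Z}_{q'}\oplus\mathbb{Z}_q$, where $q'$ is a product of distinct primes $p_i\equiv 1\pmod 4$ and $q\mid q'$, and for each prime $p_i\mid q$ there is a basis $(g_1,g_2)$ of the $p_i$-Sylow subgroup $\mathbb{Z}_{p_i}\oplus\mathbb{Z}_{p_i}$ of $H$ such that, identifying $\frac1{p_i}\mathbb{Z}/\mathbb{Z}\subset\mathbb{Q}/\mathbb{Z}$ with $\mathbb{Z}_{p_i}$, one has $\lambda(e_1g_1+e_2g_2,\,e_1g_1+e_2g_2)=e_1^2+\beta e_2^2$ for all $e_1,e_2\in\mathbb{Z}$, where $\beta$ is not a quadratic residue modulo $p_i$.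
   Context: $\mathbb{Z}_n=\mathbb{Z}/n\mathbb{Z}$. The $p$-Sylow subgroup of a finite abelian group is its subgroup of elements of $p$-power order. *)

From HB Require Import structures.
From mathcomp Require Import all_boot all_order all_algebra all_fingroup all_solvable.
Set Implicit Arguments. Unset Strict Implicit. Unset Printing Implicit Defensive.
Import GRing.Theory Num.Theory.

(* Q/Z is represented by rationals modulo integers: a map into Q/Z is given
   by a rational-valued lift, and two lifts define the same element of Q/Z
   iff their difference is an integer. *)
Definition eqQZ (a b : rat) : bool := ((a - b)%R \is a Num.int).

Local Open Scope group_scope.

Definition symmetric_bilinear_QZ (gT : finGroupType) (H : {set gT})
  (lam : gT -> gT -> rat) : Prop :=
  [/\ {in H & H, forall x y, eqQZ (lam x y) (lam y x)},
      {in H & H, forall x y, {in H, forall z, eqQZ (lam (x * y) z) (lam x z + lam y z)%R}} &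
      {in H & H, forall x y, {in H, forall z, eqQZ (lam z (x * y)) (lam z x + lam z y)%R}}].

Definition nondegenerate_QZ (gT : finGroupType) (H : {set gT})
  (lam : gT -> gT -> rat) : Prop :=
  {in H, forall g, {in H, forall h, eqQZ (lam g h) 0} -> g = 1}.

Definition Lambda0 (gT : finGroupType) (H : {set gT}) (lam : gT -> gT -> rat)
  : {set gT} := [set g in H | eqQZ (lam g g) 0].

(* the cyclic group Z_n = Z/nZ, for n >= 1 (as the additive group 'I_n) *)
Definition Zmod (n : nat) : finGroupType := 'I_n.-1.+1.

Definition prod_distinct_primes_1mod4 (n : nat) : Prop :=
  exists s : seq nat, [/\ uniq s, all prime s, all (fun p => p %% 4 == 1)%N s
                        & n = \prod_(p <- s) p]%N.

(* If Lambda_0 = 0, every element has squarefree order (if r^2 divides the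
   order n of g, then g^(n/r) is isotropic), and on every elementary abelian
   p-subgroup E the form p * lam is an anisotropic F_p-valued form.  Since every
   binary form a x^2 + b y^2 (a, b <> 0) over F_p is onto, orthogonalizing three
   independent vectors of E would produce an isotropic one; so E has rank at
   most 2 and H = Z_q' (+) Z_q with q | q' squarefree.  On a Sylow subgroup of
   rank 2 the same fact gives an orthogonal basis with lam(g1,g1) = 1/p, and
   anisotropy of e1^2 + beta e2^2 forces beta to be a non-residue, -1 being a
   square mod p = 1 (mod 4).  Conversely, an isotropic element y of prime
   order r either lies in such a Sylow subgroup, where e1^2 + beta e2^2 has no
   non-trivial zero, or generates the cyclic Sylow r-subgroup; then h^(|H|/r)
   is a power of y for every h, and as |H|/r is prime to r, lam(y,h) = 0,
   contradicting non-degeneracy. *)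

From HB Require Import structures.
From mathcomp Require Import all_boot all_order all_algebra all_fingroup all_solvable all_field.
From mathcomp Require Import ring zify.
Import GRing.Theory Num.Theory.
Set Implicit Arguments. Unset Strict Implicit. Unset Printing Implicit Defensive.

Definition nonresidue_mod (p : nat) (beta : int) : Prop :=
  forall x : int, ~~ (p%:Z %| (x ^+ 2 - beta)%R)%Z.

Definition nonresidue_diagonal_basis (gT : finGroupType) (lam : gT -> gT -> rat)
    (p : nat) (P : {set gT}) : Prop :=
  exists (g1 g2 : gT) (beta : int),
    [/\ (#[g1] = p)%g, (#[g2] = p)%g, (<[g1]> \x <[g2]> = P)%g, nonresidue_mod p beta &
        forall e1 e2 : nat,
          eqQZ (lam (g1 ^+ e1 * g2 ^+ e2)%g (g1 ^+ e1 * g2 ^+ e2)%g)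
               (((e1 ^ 2)%:Z + beta * (e2 ^ 2)%:Z)%:~R / p%:R)%R].

Lemma prod_primes_gt0 (s : seq nat) : all prime s -> 0 < \prod_(p <- s) p.
Proof. by move=> s_pr; rewrite big_seq prodn_cond_gt0 // => p /(allP s_pr)/prime_gt0. Qed.

Lemma logn_prod_primes (s : seq nat) p : uniq s -> all prime s ->
  logn p (\prod_(r <- s) r) = (p \in s).
Proof.
elim: s => [|r s IH] /=; first by rewrite big_nil logn1.
case/andP=> rs s_uniq /andP[r_pr s_pr].
rewrite big_cons lognM ?prod_primes_gt0 ?prime_gt0 // logn_prime // IH // inE.
by case: (eqVneq p r) => [->|]; rewrite ?(negbTE rs).
Qed.

Lemma prod_primes_logn_le1 n : 0 < n -> (forall p, logn p n <= 1) ->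
  n = \prod_(p <- primes n) p.
Proof.
move=> n_gt0 n_sqf; apply: eqn_from_log => // [|p].
  exact/prod_primes_gt0/all_prime_primes.
rewrite logn_prod_primes ?primes_uniq ?all_prime_primes // -logn_gt0.
by have := n_sqf p; case: (logn p n) => [|[]].
Qed.

Lemma dvdn_mod4_eq1 d m : odd d -> (forall k, k %| d -> k %% 4 != 3) ->
  m %| d -> m %% 4 = 1.
Proof.
move=> d_odd d_mod4 md; have := d_mod4 m md.
have := dvdn_odd md d_odd; rewrite -(@odd_mod m 4) //.
by case: (m %% 4) (ltn_pmod m (isT : 0 < 4)) => [|[|[|[|]]]].
Qed.

Lemma cycle_TI_notin (gT : finGroupType) (x y : gT) :
  prime #[y]%g -> y \notin <[x]>%g -> (<[x]> :&: <[y]> = 1)%g.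
Proof. by move=> y_pr yx; rewrite setIC prime_TIg -?orderE // cycle_subG. Qed.

Lemma cycle_dprod_prime2 (gT : finGroupType) (p : nat) (E : {group gT}) (x y : gT) :
  prime p -> abelian E -> #|E| = (p ^ 2)%N -> x \in E -> y \in E ->
  #[x]%g = p -> #[y]%g = p -> y \notin <[x]>%g -> (<[x]> \x <[y]> = E)%g.
Proof.
move=> p_pr cEE cardE Ex Ey ox oy yx.
have sxE : (<[x]> \subset E)%g by rewrite cycle_subG.
rewrite dprodE ?cycle_TI_notin ?oy //.
  apply/eqP; rewrite eqEcard mul_subG ?cycle_subG //=.
  by rewrite TI_cardMg ?cycle_TI_notin ?oy // -!orderE ox oy cardE.
by apply: subset_trans (sub_abelian_cent cEE sxE); rewrite cycle_subG.
Qed.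

Lemma cycle_isog_Zmod (gT : finGroupType) (x : gT) : (<[x]> \isog [set: Zmod #[x]%g])%g.
Proof.
rewrite isog_cyclic_card ?cycle_cyclic //; apply/andP; split.
  by apply/cyclicP; exists (Zp1 : 'I_(#[x]%g.-1).+1); exact: Zp_cycle.
by rewrite cardsT card_ord prednK ?order_gt0 // -orderE.
Qed.

Lemma dprod_cycles_isog_Zmod (gT : finGroupType) (H : {group gT}) (x y : gT) :
  (<[x]> \x <[y]> = H)%g -> (H \isog [set: (Zmod #[x]%g * Zmod #[y]%g)%type])%g.
Proof.
move=> defH; have -> : [set: (Zmod #[x]%g * Zmod #[y]%g)%type] = setX [set: Zmod #[x]%g] [set: Zmod #[y]%g].
  by apply/setP => -[a b]; rewrite !inE.
apply: isog_dprod defH (setX_dprod [set: Zmod #[x]%g]%G [set: Zmod #[y]%g]%G) _ _.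
  exact: isog_trans (cycle_isog_Zmod x) (isog_setX1 _ _).
exact: isog_trans (cycle_isog_Zmod y) (isog_set1X _ _).
Qed.

Lemma card_Zmod_prod m n : 0 < m -> 0 < n -> #|[set: (Zmod m * Zmod n)%type]| = m * n.
Proof. by move=> m_gt0 n_gt0; rewrite cardsT card_prod !card_ord !prednK. Qed.

Lemma abelian_rank2_cycles (gT : finGroupType) (H : {group gT}) :
  abelian H -> ('r(H))%g <= 2 ->
  exists x y, (<[x]> \x <[y]> = H)%g /\ #[y]%g %| #[x]%g.
Proof.
move=> cHH rH; have [b defH ob] := abelian_structure cHH.
have sb : size b <= 2 by rewrite -(size_map order) ob size_abelian_type.
have := abelian_type_dvdn_sorted H; rewrite -ob.
case: b defH ob sb => [|x [|y [|z b]]] //= defH _ _ yx.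
- by exists 1%g, 1%g; rewrite cycle1 dprodg1 order1 -defH big_nil.
- by exists x, 1%g; rewrite cycle1 dprodg1 order1 dvd1n -defH big_seq1.
by exists x, y; rewrite -defH !big_cons big_nil dprodg1; case/andP: yx.
Qed.

Local Open Scope ring_scope.

Lemma eqQZ_refl : reflexive eqQZ.
Proof. by move=> a; rewrite /eqQZ subrr rpred0. Qed.

Lemma eqQZ_sym : symmetric eqQZ.
Proof. by move=> a b; rewrite /eqQZ -opprB rpredN. Qed.

Lemma eqQZ_trans : transitive eqQZ.
Proof. by move=> b a c hab hbc; have := rpredD hab hbc; rewrite addrA subrK. Qed.

Lemma eqQZD a b c d : eqQZ a b -> eqQZ c d -> eqQZ (a + c) (b + d).
Proof. by move=> hab hcd; have := rpredD hab hcd; rewrite /eqQZ opprD addrACA. Qed.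

Lemma eqQZMn (n : nat) a b : eqQZ a b -> eqQZ (n%:R * a) (n%:R * b).
Proof. by rewrite /eqQZ -mulrBr => h; rewrite rpredM ?natr_int. Qed.

Lemma eqQZ0_coprime (m n : nat) c : coprime m n ->
  eqQZ (m%:R * c) 0 -> eqQZ (n%:R * c) 0 -> eqQZ c 0.
Proof.
rewrite /eqQZ !subr0 => /eqnP cop hm hn.
have [u [v uv1]] := Bezoutz m n; rewrite /gcdz /= cop in uv1.
have -> : c = u%:~R * (m%:R * c) + v%:~R * (n%:R * c).
  by rewrite !mulrA -mulrDl !pmulrn -!intrM -intrD uv1 mul1r.
by apply: rpredD; apply: rpredM; rewrite ?intr_int.
Qed.

Lemma Qint_divn (p : nat) (z : int) : (0 < p)%N ->
  ((z%:~R / p%:R : rat) \is a Num.int) = (p%:Z %| z)%Z.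
Proof.
move=> p_gt0; apply/idP/idP => [/floorK zp|/Qint_dvdz//].
have -> : z = (Num.floor (z%:~R / p%:R : rat) * p%:Z)%R.
  by apply: (@intr_inj rat); rewrite intrM zp mulfVK // pnatr_eq0 -lt0n.
exact: dvdz_mull.
Qed.

(* The p-torsion (1/p)Z/Z of Q/Z, identified with F_p through r + Z |-> p r. *)
Definition ptorsion (p : nat) (r : rat) := (p%:R * r) \is a Num.int.

Definition Fp_of_QZ (p : nat) (r : rat) : 'F_p := (Num.floor (p%:R * r))%:~R.

Section PTorsion.
Variables (p : nat) (r s : rat).
Hypothesis (p_pr : prime p).

Lemma ptorsionD : ptorsion p r -> ptorsion p s -> ptorsion p (r + s).
Proof. by rewrite /ptorsion mulrDr; apply: rpredD. Qed.

Lemma ptorsion_frac (z : int) : ptorsion p (z%:~R / p%:R).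
Proof. by rewrite /ptorsion mulrC mulfVK ?intr_int // pnatr_eq0 -lt0n prime_gt0. Qed.

Lemma eqQZ_Fp : ptorsion p r -> ptorsion p s ->
  eqQZ r s = (Fp_of_QZ p r == Fp_of_QZ p s).
Proof.
move=> /floorK pr /floorK ps; have p_neq0 : (p%:R : rat) != 0.
  by rewrite pnatr_eq0 -lt0n prime_gt0.
rewrite /Fp_of_QZ -subr_eq0 -intrB -(dvdz_pcharf (pchar_Fp p_pr)) -Qint_divn ?prime_gt0 //.
by rewrite /eqQZ intrB pr ps -mulrBr mulrC mulKf.
Qed.

Lemma Fp_of_QZD : ptorsion p r -> ptorsion p s ->
  Fp_of_QZ p (r + s) = Fp_of_QZ p r + Fp_of_QZ p s.
Proof. by move=> pr ps; rewrite /Fp_of_QZ mulrDr floorDzr // intrD. Qed.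

Lemma Fp_of_QZ_frac (z : int) : Fp_of_QZ p (z%:~R / p%:R) = z%:~R.
Proof. by rewrite /Fp_of_QZ mulrC mulfVK ?intrKfloor // pnatr_eq0 -lt0n prime_gt0. Qed.

End PTorsion.

Section QZForm.
Variables (gT : finGroupType) (H : {group gT}) (lam : gT -> gT -> rat).
Hypothesis lamP : symmetric_bilinear_QZ H lam.

Lemma lamC x y : x \in H -> y \in H -> eqQZ (lam x y) (lam y x).
Proof. by case: lamP => lamC _ _; apply: lamC. Qed.

Lemma lamMl x y z : x \in H -> y \in H -> z \in H ->
  eqQZ (lam (x * y)%g z) (lam x z + lam y z).
Proof. by case: lamP => _ lamMl _ Hx Hy Hz; apply: lamMl. Qed.

Lemma lam1l y : y \in H -> eqQZ (lam 1%g y) 0.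
Proof.
move=> Hy; have := lamMl (group1 H) (group1 H) Hy; rewrite mulg1 /eqQZ subr0.
by rewrite opprD addrA subrr add0r rpredN.
Qed.

Lemma lamXl x y n : x \in H -> y \in H -> eqQZ (lam (x ^+ n)%g y) (n%:R * lam x y).
Proof.
move=> Hx Hy; elim: n => [|n IH]; first by rewrite expg0 mul0r lam1l.
rewrite expgS mulrS mulrDl mul1r.
exact: eqQZ_trans (lamMl Hx (groupX n Hx) Hy) (eqQZD (eqQZ_refl _) IH).
Qed.

Lemma lamXr x y n : x \in H -> y \in H -> eqQZ (lam y (x ^+ n)%g) (n%:R * lam y x).
Proof.
move=> Hx Hy; apply: eqQZ_trans (lamC Hy (groupX n Hx)) _.
exact: eqQZ_trans (lamXl n Hx Hy) (eqQZMn n (lamC Hx Hy)).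
Qed.

Lemma lamXX x n : x \in H -> eqQZ (lam (x ^+ n)%g (x ^+ n)%g) ((n ^ 2)%N%:R * lam x x).
Proof.
move=> Hx; apply: eqQZ_trans (lamXl n Hx (groupX n Hx)) _.
by rewrite natrX expr2 -mulrA; apply: eqQZMn; apply: lamXr.
Qed.

Lemma lam_expg_eq1 x y n : x \in H -> y \in H -> (x ^+ n = 1)%g ->
  eqQZ (n%:R * lam x y) 0.
Proof.
move=> Hx Hy xn1; rewrite eqQZ_sym; apply: eqQZ_trans (lamXl n Hx Hy).
by rewrite xn1 eqQZ_sym lam1l.
Qed.

End QZForm.

Section PrimeField.
Variable p : nat.
Hypotheses (p_pr : prime p) (p_odd : odd p).

Lemma Fp_sqr_inj_half (k l : nat) : (k <= p./2)%N -> (l <= p./2)%N ->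
  (k%:R : 'F_p) ^+ 2 = l%:R ^+ 2 -> k = l.
Proof.
have p_eq : p = (p./2).*2.+1 by rewrite -[LHS]odd_double_half p_odd.
move=> kp lp /eqP; rewrite -subr_eq0 subr_sqr mulf_eq0 -natrD.
rewrite -(dvdn_pcharf (pchar_Fp p_pr)) => /orP[|p_dvd_kl]; last first.
  by case: (posnP (k + l)) => [|/dvdn_leq/(_ p_dvd_kl)]; lia.
rewrite subr_eq0 => /eqP/(congr1 val) /=; rewrite !val_Fp_nat // !modn_small //; lia.
Qed.

(* Pigeonhole: a x^2 and c - b y^2 each take (p + 1) / 2 values. *)
Lemma Fp_binary_onto (a b c : 'F_p) : a != 0 -> b != 0 ->
  exists x y : 'F_p, a * x ^+ 2 + b * y ^+ 2 = c.
Proof.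
move=> a_neq0 b_neq0; pose h := 'I_(p./2).+1.
pose A := [set a * (k%:R : 'F_p) ^+ 2 | k : h].
pose B := [set c - b * (k%:R : 'F_p) ^+ 2 | k : h].
have sqr_inj (k l : h) : (k%:R : 'F_p) ^+ 2 = l%:R ^+ 2 -> k = l.
  by move/Fp_sqr_inj_half => kl; apply/val_inj/kl; rewrite -ltnS.
have cardAB : (#|A| + #|B| = (p./2).+1 + (p./2).+1)%N.
  rewrite !card_imset ?card_ord // => k l.
    by move/addrI/oppr_inj/(mulfI b_neq0)/sqr_inj.
  by move/(mulfI a_neq0)/sqr_inj.
have : (0 < #|A :&: B|)%N.
  have := cardsUI A B; rewrite cardAB; have := max_card (A :|: B); rewrite card_Fp //.
  by have := odd_double_half p; rewrite p_odd add1n -addnn; lia.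
rewrite card_gt0 => /set0Pn[_ /setIP[/imsetP[k _ ->] /imsetP[l _ akl]]].
by exists k%:R, l%:R; rewrite akl subrK.
Qed.

End PrimeField.

Lemma nonresidue_modP p beta : prime p ->
  nonresidue_mod p beta <-> forall y : 'F_p, y ^+ 2 != beta%:~R.
Proof.
move=> p_pr; have dvd_sqr x : (p%:Z %| x ^+ 2 - beta)%Z = ((x%:~R : 'F_p) ^+ 2 == beta%:~R).
  by rewrite (dvdz_pcharf (pchar_Fp p_pr)) intrB subr_eq0 rmorphXn.
split=> [nonres y | nonres x]; last by rewrite dvd_sqr.
by have := nonres (val y)%:Z; rewrite dvd_sqr -pmulrn natr_Zp.
Qed.

Lemma Fp_sqrt_neg1 (p : nat) : prime p -> (p %% 4 = 1)%N -> exists i : 'F_p, i ^+ 2 = -1.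
Proof.
move=> p_pr p4.
have [g defU] := cyclicP (field_unit_group_cyclic [set: {unit 'F_p}]%G).
have [k p1_eq] : exists k, p.-1 = (4 * k)%N by exists (p %/ 4)%N; have := divn_eq p 4; lia.
have k_gt0 : (0 < k)%N by have := prime_gt1 p_pr; lia.
have og : #[g]%g = (4 * k)%N by rewrite /order -defU card_finField_unit card_Fp.
have ogk : #[(g ^+ k)%g]%g = 4%N by rewrite orderXdiv og ?dvdn_mull // mulnK.
exists (FinRing.uval (g ^+ k)%g).
have g4k : ((g ^+ k) ^+ (2 * 2) = 1)%g by apply/eqP; rewrite -order_dvdn ogk.
have : (FinRing.uval (g ^+ k)%g) ^+ 2 ^+ 2 = 1.
  by rewrite -exprM -FinRing.val_unitX g4k.
move/eqP; rewrite sqrf_eq1 => /orP[/eqP g2k|/eqP //].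
suff : (#[(g ^+ k)%g]%g %| 2)%N by rewrite ogk.
by rewrite order_dvdn; apply/eqP/val_inj; rewrite FinRing.val_unitX g2k.
Qed.

Lemma Fp_nonresidue_anisotropic p (beta : int) (I J : 'F_p) : prime p -> (p %% 4 = 1)%N ->
  nonresidue_mod p beta -> I ^+ 2 + beta%:~R * J ^+ 2 = 0 -> I = 0 /\ J = 0.
Proof.
move=> p_pr p4 /(nonresidue_modP _ p_pr) nonres IJ; have [i i2] := Fp_sqrt_neg1 p_pr p4.
have J0 : J = 0.
  apply: contraNeq (nonres (i * I / J)) => J_neq0; apply/eqP.
  have -> : beta%:~R = - I ^+ 2 / J ^+ 2.
    by apply: (canRL (mulfK (expf_neq0 2 J_neq0))); apply/eqP; rewrite -addr_eq0 addrC IJ.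
  by rewrite !exprMn i2 exprVn mulN1r.
by move: IJ; rewrite J0 expr0n mulr0 addr0 => /eqP; rewrite expf_eq0 => /andP[_ /eqP].
Qed.

Section ElementaryAbelianForm.
Variables (gT : finGroupType) (H : {group gT}) (lam : gT -> gT -> rat).
Hypothesis lamP : symmetric_bilinear_QZ H lam.
Variables (p : nat) (E : {group gT}).
Hypotheses (p_pr : prime p) (sEH : E \subset H) (abelE : (p.-abelem E)%g).

Definition lamFp x y : 'F_p := Fp_of_QZ p (lam x y).

Let inH x : x \in E -> x \in H. Proof. exact: subsetP sEH x. Qed.
Let cEE : abelian E. Proof. by case/(abelemP p_pr): abelE. Qed.
Let expE x : x \in E -> (x ^+ p = 1)%g. Proof. by case/(abelemP p_pr): abelE => _; apply. Qed.

Let lam_ptorsion x y : x \in E -> y \in E -> ptorsion p (lam x y).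
Proof.
by move=> Ex Ey; have := lam_expg_eq1 lamP (inH Ex) (inH Ey) (expE Ex); rewrite /eqQZ subr0.
Qed.

Lemma eqQZ_lamFp x y (z : int) : x \in E -> y \in E ->
  eqQZ (lam x y) (z%:~R / p%:R) = (lamFp x y == z%:~R).
Proof.
move=> Ex Ey; rewrite (eqQZ_Fp p_pr) ?lam_ptorsion ?(ptorsion_frac p_pr) //.
by rewrite (Fp_of_QZ_frac p_pr).
Qed.

Lemma eqQZ0_lamFp x y : x \in E -> y \in E -> eqQZ (lam x y) 0 = (lamFp x y == 0).
Proof. by move=> Ex Ey; have := eqQZ_lamFp 0 Ex Ey; rewrite mulr0z mul0r. Qed.

Lemma lamFpC x y : x \in E -> y \in E -> lamFp x y = lamFp y x.
Proof.
by move=> Ex Ey; apply/eqP; rewrite /lamFp -(eqQZ_Fp p_pr) ?lam_ptorsion ?(lamC lamP) ?inH.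
Qed.

Lemma lamFpMl x y z : x \in E -> y \in E -> z \in E ->
  lamFp (x * y)%g z = lamFp x z + lamFp y z.
Proof.
move=> Ex Ey Ez; rewrite /lamFp -Fp_of_QZD ?lam_ptorsion //; apply/eqP.
by rewrite -(eqQZ_Fp p_pr) ?ptorsionD ?lam_ptorsion ?groupM ?(lamMl lamP) ?inH.
Qed.

Lemma lamFpMr x y z : x \in E -> y \in E -> z \in E ->
  lamFp z (x * y)%g = lamFp z x + lamFp z y.
Proof. by move=> Ex Ey Ez; rewrite lamFpC ?groupM ?lamFpMl // !(lamFpC Ez). Qed.

Lemma lamFp1l y : y \in E -> lamFp 1%g y = 0.
Proof. by move=> Ey; apply/eqP; rewrite -eqQZ0_lamFp ?(lam1l lamP) ?inH. Qed.

Lemma lamFpXl x y n : x \in E -> y \in E -> lamFp (x ^+ n)%g y = n%:R * lamFp x y.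
Proof.
move=> Ex Ey; elim: n => [|n IH]; first by rewrite expg0 mul0r lamFp1l.
by rewrite expgS lamFpMl ?groupX // IH mulrS mulrDl mul1r.
Qed.

Lemma lamFpXr x y n : x \in E -> y \in E -> lamFp y (x ^+ n)%g = n%:R * lamFp y x.
Proof. by move=> Ex Ey; rewrite lamFpC ?groupX ?lamFpXl // lamFpC. Qed.

Lemma lamFpMM x y : x \in E -> y \in E ->
  lamFp (x * y)%g (x * y)%g = lamFp x x + lamFp y y + 2 * lamFp x y.
Proof.
by move=> Ex Ey; rewrite lamFpMl ?groupM // !lamFpMr // (lamFpC Ey Ex); ring.
Qed.

Lemma lamFp_orthoXX u v (i j : nat) : u \in E -> v \in E -> lamFp u v = 0 ->
  lamFp (u ^+ i * v ^+ j)%g (u ^+ i * v ^+ j)%g = i%:R ^+ 2 * lamFp u u + j%:R ^+ 2 * lamFp v v.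
Proof.
move=> Eu Ev uv; rewrite lamFpMM ?groupX // !lamFpXl ?groupX // !lamFpXr // uv.
by rewrite !mulr0 addr0 !mulrA -!expr2.
Qed.

Lemma lamFp_orthogonalize1 u w : u \in E -> w \in E -> lamFp u u != 0 ->
  exists s : nat, lamFp u (u ^+ s * w)%g = 0.
Proof.
move=> Eu Ew uu_neq0; exists (val (- lamFp u w / lamFp u u)).
by rewrite lamFpMr ?groupX // lamFpXr // natr_Zp divfK // addNr.
Qed.

Lemma lamFp_orthogonalize2 u v w : u \in E -> v \in E -> w \in E ->
  lamFp u u != 0 -> lamFp v v != 0 -> lamFp u v = 0 ->
  exists s r : nat, lamFp u (u ^+ s * v ^+ r * w)%g = 0 /\ lamFp v (u ^+ s * v ^+ r * w)%g = 0.
Proof.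
move=> Eu Ev Ew uu_neq0 vv_neq0 uv.
exists (val (- lamFp u w / lamFp u u)), (val (- lamFp v w / lamFp v v)).
rewrite !lamFpMr ?groupM ?groupX // !lamFpXr // !natr_Zp uv (lamFpC Ev Eu) uv.
by rewrite !divfK // !mulr0 !addr0 add0r !addNr.
Qed.

Definition lamFp_anisotropic := {in E, forall x, lamFp x x = 0 -> x = 1%g}.

Section Anisotropic.
Hypothesis aniso : lamFp_anisotropic.

Let aniso_neq0 x : x \in E -> x != 1%g -> lamFp x x != 0.
Proof. by move=> Ex; apply: contra_neq; apply: aniso. Qed.

Lemma lamFp_orthogonal_notin (K : {group gT}) u : u \in E -> u \in K -> u != 1%g ->
  (#|K| < #|E|)%N -> exists v, [/\ v \in E, v \notin K & lamFp u v = 0].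
Proof.
move=> Eu Ku u_neq1 ltKE.
have /subsetPn[w Ew wK] : ~~ (E \subset K).
  by apply: contraTN ltKE => /subset_leq_card; rewrite leqNgt.
have [s us] := lamFp_orthogonalize1 Eu Ew (aniso_neq0 Eu u_neq1).
by exists (u ^+ s * w)%g; rewrite groupM ?groupX // groupMl ?groupX.
Qed.

Lemma lamFp_orthogonal_pair : (p < #|E|)%N ->
  exists u v, [/\ u \in E, v \in E, u != 1%g, v \notin <[u]>%g & lamFp u v = 0].
Proof.
move=> ltpE; have /trivgPn[u Eu u_neq1] : (E :!=: 1)%g.
  by apply: contraTneq ltpE => ->; rewrite cards1 -leqNgt prime_gt0.
have [|v [Ev vu uv]] := lamFp_orthogonal_notin Eu (cycle_id u) u_neq1.
  by rewrite -orderE (abelem_order_p abelE).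
by exists u, v.
Qed.

Lemma lamFp_anisotropic_card : odd p -> (#|E| < p ^ 3)%N.
Proof.
move=> p_odd; rewrite ltnNge; apply/negP => cardE.
have p1 := prime_gt1 p_pr.
have p2E : (p ^ 2 < #|E|)%N by apply: leq_trans cardE; rewrite ltn_exp2l.
have [|u [v [Eu Ev u_neq1 vu uv]]] := lamFp_orthogonal_pair.
  by apply: leq_ltn_trans p2E; rewrite -{1}(expn1 p) leq_pexp2l ?prime_gt0.
have v_neq1 : v != 1%g by apply: contraNneq vu => ->; rewrite group1.
have [ou ov] := (abelem_order_p abelE Eu u_neq1, abelem_order_p abelE Ev v_neq1).
pose K := (<[u]> <*> <[v]>)%G.
have defK : K :=: (<[u]> * <[v]>)%g.
  apply: cent_joinEr; apply: subset_trans (sub_abelian_cent cEE _);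
  by rewrite cycle_subG.
have Kuv i j : (u ^+ i * v ^+ j)%g \in K by rewrite defK mem_mulg ?mem_cycle.
have /subsetPn[w Ew wK] : ~~ (E \subset K).
  apply: contraTN p2E => /subset_leq_card; rewrite -leqNgt defK.
  by rewrite TI_cardMg ?cycle_TI_notin -?orderE ?ou ?ov.
have [s [r [uz vz]]] := lamFp_orthogonalize2 Eu Ev Ew
  (aniso_neq0 Eu u_neq1) (aniso_neq0 Ev v_neq1) uv.
set z := (u ^+ s * v ^+ r * w)%g in uz vz.
have Ez : z \in E by rewrite !groupM ?groupX.
have zK : z \notin K by rewrite groupMl ?Kuv.
clearbody z.
have [X [Y XY]] := Fp_binary_onto p_pr p_odd (- lamFp z z)
  (aniso_neq0 Eu u_neq1) (aniso_neq0 Ev v_neq1).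
have Euvz : (u ^+ X * v ^+ Y * z)%g \in E by rewrite !groupM ?groupX.
suff /(aniso Euvz)/eqP : lamFp (u ^+ X * v ^+ Y * z) (u ^+ X * v ^+ Y * z) = 0.
  by rewrite -eq_invg_mul => /eqP defz; rewrite -defz groupV Kuv in zK.
rewrite lamFpMM ?groupM ?groupX // lamFp_orthoXX // lamFpMl ?groupX //.
rewrite !lamFpXl // uz vz !natr_Zp -[lamFp z z]opprK -XY; ring.
Qed.

Lemma lamFp_normalized_pair : odd p -> (p < #|E|)%N ->
  exists g1 g2, [/\ g1 \in E, g2 \in E, g2 \notin <[g1]>%g, lamFp g1 g1 = 1 & lamFp g1 g2 = 0].
Proof.
move=> p_odd ltpE.
have [u [v [Eu Ev u_neq1 vu uv]]] := lamFp_orthogonal_pair ltpE.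
have v_neq1 : v != 1%g by apply: contraNneq vu => ->; rewrite group1.
have [X [Y XY]] := Fp_binary_onto p_pr p_odd 1 (aniso_neq0 Eu u_neq1) (aniso_neq0 Ev v_neq1).
have Eg1 : (u ^+ X * v ^+ Y)%g \in E by rewrite groupM ?groupX.
have g1g1 : lamFp (u ^+ X * v ^+ Y) (u ^+ X * v ^+ Y) = 1.
  by rewrite lamFp_orthoXX // !natr_Zp -XY mulrC [Y ^+ 2 * _]mulrC.
have g1_neq1 : (u ^+ X * v ^+ Y)%g != 1%g.
  by apply: contra_eqN g1g1 => /eqP->; rewrite lamFp1l // eq_sym oner_eq0.
have [|g2 [Eg2 g2g1 g1g2]] := lamFp_orthogonal_notin Eg1 (cycle_id _) g1_neq1.
  by rewrite -orderE (abelem_order_p abelE).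
by exists (u ^+ X * v ^+ Y)%g, g2.
Qed.

End Anisotropic.

Lemma nonresidue_diagonal_basis_of_anisotropic : lamFp_anisotropic ->
  (p %% 4 = 1)%N -> #|E| = (p ^ 2)%N -> nonresidue_diagonal_basis lam p E.
Proof.
move=> aniso p4 cardE; have p_odd : odd p by rewrite -(@odd_mod p 4) ?p4.
have [|g1 [g2 [Eg1 Eg2 g2g1 g1g1 g1g2]]] := lamFp_normalized_pair aniso p_odd.
  by rewrite cardE -{1}(expn1 p) ltn_exp2l ?prime_gt1.
have g2_neq1 : g2 != 1%g by apply: contraNneq g2g1 => ->; rewrite group1.
have g1_neq1 : g1 != 1%g.
  by apply: contra_eqN g1g1 => /eqP->; rewrite lamFp1l // eq_sym oner_eq0.
have [og1 og2] := (abelem_order_p abelE Eg1 g1_neq1, abelem_order_p abelE Eg2 g2_neq1).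
have diag (e1 e2 : nat) : lamFp (g1 ^+ e1 * g2 ^+ e2) (g1 ^+ e1 * g2 ^+ e2)
    = e1%:R ^+ 2 + e2%:R ^+ 2 * lamFp g2 g2.
  by rewrite lamFp_orthoXX // g1g1 mulr1.
exists g1, g2, (val (lamFp g2 g2))%:Z; split=> //.
- exact: cycle_dprod_prime2 og1 og2 g2g1.
- apply/(nonresidue_modP _ p_pr) => x; rewrite -pmulrn natr_Zp.
  apply: contraNN g2g1 => /eqP x2; have [i i2] := Fp_sqrt_neg1 p_pr p4.
  pose e : 'F_p := i * x.
  have Eg : (g1 ^+ e * g2 ^+ 1)%g \in E by rewrite groupM ?groupX.
  have /(aniso _ Eg)/eqP : lamFp (g1 ^+ e * g2 ^+ 1) (g1 ^+ e * g2 ^+ 1) = 0.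
    by rewrite diag natr_Zp exprMn i2 x2; ring.
  by rewrite -eq_invg_mul expg1 => /eqP <-; rewrite groupV mem_cycle.
move=> e1 e2; rewrite eqQZ_lamFp ?groupM ?groupX // diag.
by rewrite intrD intrM -!pmulrn natr_Zp !natrX mulrC.
Qed.

End ElementaryAbelianForm.

Lemma nonresidue_diagonal_basis_anisotropic (gT : finGroupType) (lam : gT -> gT -> rat)
    p (P : {group gT}) y : prime p -> (p %% 4 = 1)%N ->
  nonresidue_diagonal_basis lam p P -> y \in P -> eqQZ (lam y y) 0 -> y = 1%g.
Proof.
move=> p_pr p4 [g1 [g2 [beta [og1 og2 defP nonres lamE]]]].
rewrite -(dprodW defP) => /mulsgP[_ _ /cycleP[i ->] /cycleP[j ->] ->] yy0.
have /eqP : ((i ^ 2)%N%:Z + beta * (j ^ 2)%N%:Z)%:~R == 0 :> 'F_p.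
  rewrite -(dvdz_pcharf (pchar_Fp p_pr)) -Qint_divn ?prime_gt0 //.
  by move: (lamE i j); rewrite eqQZ_sym => /eqQZ_trans/(_ yy0); rewrite /eqQZ subr0.
rewrite intrD intrM -!pmulrn !natrX => /(Fp_nonresidue_anisotropic p_pr p4 nonres)[/eqP + /eqP].
rewrite -!(dvdn_pcharf (pchar_Fp p_pr)) -{1}og1 -og2 !order_dvdn => /eqP-> /eqP->.
by rewrite mulg1.
Qed.

Section AbelianForm.
Variables (gT : finGroupType) (H : {group gT}) (lam : gT -> gT -> rat).
Hypotheses (cHH : abelian H) (lamP : symmetric_bilinear_QZ H lam).

Lemma lam_radical_prime_order y : y \in H -> prime #[y]%g -> (logn #[y]%g #|H| <= 1)%N ->
  eqQZ (lam y y) 0 -> {in H, forall h, eqQZ (lam y h) 0}.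
Proof.
move=> Hy y_pr y_sqf yy0 h Hh; set r := #[y]%g in y_pr y_sqf.
have [P sylP] := Sylow_exists r H.
have nPH : (P <| H)%g by rewrite -sub_abelian_normal ?(pHall_sub sylP).
have r_dvd_H : (r %| #|H|)%N by rewrite order_dvdG.
have defP : P :=: <[y]>%g.
  apply/eqP; rewrite eq_sym eqEcard cycle_subG (mem_normal_Hall sylP nPH Hy).
  rewrite /p_elt pnat_id //= (card_Hall sylP) p_part -orderE.
  by rewrite -/r -[X in (_ <= X)%N](expn1 r) leq_exp2l ?prime_gt1.
pose m := (#|H| %/ r)%N.
have cardH : #|H| = (m * r)%N by rewrite divnK.
have m_coprime : coprime m r.
  rewrite coprime_sym prime_coprime //; apply: contraTN y_sqf => r_dvd_m.
  by rewrite -ltnNge -pfactor_dvdn ?cardG_gt0 // cardH expnS expn1 mulnC dvdn_mul.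
apply: eqQZ0_coprime m_coprime _ (lam_expg_eq1 lamP Hy Hh (expg_order y)).
have : (h ^+ m)%g \in P.
  rewrite (mem_normal_Hall sylP nPH) ?groupX //; apply: pnat_dvd (pnat_id y_pr).
  by rewrite order_dvdn -expgM -cardH expg_cardG.
rewrite defP => /cycleP[k hmk].
have := lamXr lamP m Hh Hy; rewrite eqQZ_sym hmk => /eqQZ_trans; apply.
by apply: eqQZ_trans (lamXr lamP k Hy Hy) _; have := eqQZMn k yy0; rewrite mulr0.
Qed.

Hypothesis H_1mod4 : forall p, (p %| #|H|)%N -> (p %% 4 = 1)%N.

Let H_odd p : (p %| #|H|)%N -> odd p.
Proof. by move/H_1mod4 => p4; rewrite -(@odd_mod p 4) ?p4. Qed.

Section Anisotropic.
Hypothesis Lambda0_trivial : Lambda0 H lam = 1%g.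

Let lam_aniso x : x \in H -> eqQZ (lam x x) 0 -> x = 1%g.
Proof.
move=> Hx xx0; have : x \in Lambda0 H lam by rewrite inE Hx xx0.
by rewrite Lambda0_trivial => /set1P.
Qed.

Let lamFp_aniso p (E : {group gT}) : prime p -> E \subset H -> (p.-abelem E)%g ->
  lamFp_anisotropic lam p E.
Proof.
move=> p_pr sEH abelE x Ex /eqP xx0.
by apply: lam_aniso (subsetP sEH x Ex) _; rewrite (eqQZ0_lamFp lamP p_pr sEH abelE).
Qed.

Lemma logn_order_anisotropic x p : x \in H -> (logn p #[x]%g <= 1)%N.
Proof.
move=> Hx; rewrite leqNgt; apply/negP => logx.
have : p \in primes #[x]%g by rewrite -logn_gt0 ltnW.
rewrite mem_primes => /and3P[p_pr _ _].
have /dvdnP[k ox] : (p ^ 2 %| #[x]%g)%N by rewrite pfactor_dvdn.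
have k_gt0 : (0 < k)%N by move: (order_gt0 x); rewrite ox muln_gt0 => /andP[].
suff /eqP : (x ^+ (k * p) = 1)%g.
  rewrite -order_dvdn ox => /dvdn_leq; have := prime_gt1 p_pr; nia.
apply: lam_aniso (groupX _ Hx) _; apply: eqQZ_trans (lamXX lamP _ Hx) _.
have -> : ((k * p) ^ 2)%N = (k * #[x]%g)%N by rewrite ox; ring.
by rewrite natrM -mulrA; have := eqQZMn k (lam_expg_eq1 lamP Hx Hx (expg_order x)); rewrite mulr0.
Qed.

Lemma rank_anisotropic : (('r(H))%g <= 2)%N.
Proof.
have [p p_pr ->] := rank_witness H; have [E /pnElemP[sEH abelE dimE]] := p_rank_witness p H.
rewrite leqNgt; apply/negP => rank_gt2.
have cardE : #|E| = (p ^ ('r_p(H))%g)%N by rewrite (card_pgroup (abelem_pgroup abelE)) dimE.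
have p_dvd_H : (p %| #|H|)%N.
  apply: dvdn_trans (cardSg sEH); rewrite cardE -{1}(expn1 p) dvdn_exp2l //; lia.
have := lamFp_anisotropic_card lamP p_pr sEH abelE (lamFp_aniso p_pr sEH abelE) (H_odd p_dvd_H).
by rewrite cardE ltn_exp2l ?prime_gt1 // ltnNge rank_gt2.
Qed.

Lemma Sylow_nonresidue_basis x y p (P : {group gT}) :
  (<[x]> \x <[y]> = H)%g -> (#[y]%g %| #[x]%g)%N -> prime p -> (p %| #[y]%g)%N ->
  (P \in 'Syl_p(H))%g -> nonresidue_diagonal_basis lam p P.
Proof.
move=> defH yx p_pr py; rewrite inE => sylP; have sPH := pHall_sub sylP.
have [Hx Hy] : x \in H /\ y \in H.
  by have [_ /mulG_sub[]] := dprodP defH; rewrite !cycle_subG.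
have logn_order z : z \in H -> (p %| #[z]%g)%N -> logn p #[z]%g = 1%N.
  move=> Hz pz; have := logn_order_anisotropic p Hz.
  have : (0 < logn p #[z]%g)%N by rewrite logn_gt0 mem_primes p_pr order_gt0.
  lia.
have cardP : #|P| = (p ^ 2)%N.
  rewrite (card_Hall sylP) -(dprod_card defH) -!orderE p_part lognM ?order_gt0 //.
  by rewrite !logn_order // (dvdn_trans py yx).
have abelP : (p.-abelem P)%g.
  apply/(abelemP p_pr); split=> [|z Pz]; first exact: abelianS sPH cHH.
  apply/eqP; rewrite -order_dvdn -(part_pnat_id (mem_p_elt (pHall_pgroup sylP) Pz)) p_part.
  by rewrite -[X in (_ %| X)%N](expn1 p) dvdn_exp2l // logn_order_anisotropic // (subsetP sPH).
apply: (nonresidue_diagonal_basis_of_anisotropic lamP p_pr sPH abelP) cardP.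
  exact: lamFp_aniso.
exact/H_1mod4/(dvdn_trans py)/order_dvdG.
Qed.

Lemma Lambda0_trivial_structure : exists q' q : nat,
  [/\ prod_distinct_primes_1mod4 q', (q %| q')%N,
      (H \isog [set: (Zmod q' * Zmod q)%type])%g &
      forall p, prime p -> (p %| q)%N -> forall P : {group gT},
        (P \in 'Syl_p(H))%g -> nonresidue_diagonal_basis lam p P].
Proof.
have [x [y [defH yx]]] := abelian_rank2_cycles cHH rank_anisotropic.
have Hx : x \in H by have [_ /mulG_sub[]] := dprodP defH; rewrite cycle_subG.
exists #[x]%g, #[y]%g; split=> //; last by move=> p p_pr py P; apply: Sylow_nonresidue_basis defH yx p_pr py.
- exists (primes #[x]%g); split; rewrite ?primes_uniq ?all_prime_primes //.
    apply/allP => p; rewrite mem_primes => /and3P[_ _ px]; apply/eqP/H_1mod4.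
    exact: dvdn_trans px (order_dvdG Hx).
  apply: prod_primes_logn_le1 (order_gt0 x) _ => p; exact: logn_order_anisotropic.
exact: dprod_cycles_isog_Zmod.
Qed.

End Anisotropic.

Section Structure.
Variables q' q : nat.
Hypotheses (lam_nondeg : nondegenerate_QZ H lam) (q'_sqf : prod_distinct_primes_1mod4 q').
Hypotheses (qq' : (q %| q')%N) (isoH : (H \isog [set: (Zmod q' * Zmod q)%type])%g).
Hypothesis sylH : forall p, prime p -> (p %| q)%N -> forall P : {group gT},
  (P \in 'Syl_p(H))%g -> nonresidue_diagonal_basis lam p P.

Lemma logn_card_structure p : ~~ (p %| q)%N -> (logn p #|H| <= 1)%N.
Proof.
move=> pq; have [s [s_uniq s_pr _ q'_eq]] := q'_sqf.
have q'_gt0 : (0 < q')%N by rewrite q'_eq prod_primes_gt0.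
have q_gt0 : (0 < q)%N := dvdn_gt0 q'_gt0 qq'.
rewrite (card_isog isoH) card_Zmod_prod // lognM // q'_eq logn_prod_primes //.
by rewrite lognE (negbTE pq) !andbF addn0 leq_b1.
Qed.

Lemma no_isotropic_prime_order y : y \in H -> prime #[y]%g -> ~~ eqQZ (lam y y) 0.
Proof.
move=> Hy y_pr; apply/negP => yy0; suff y1 : y = 1%g by rewrite y1 order1 in y_pr.
have [r_dvd_q | r_ndvd_q] := boolP (#[y]%g %| q)%N.
  have [P sylP] := Sylow_exists #[y]%g H.
  have nPH : (P <| H)%g by rewrite -sub_abelian_normal ?(pHall_sub sylP).
  have Py : y \in P by rewrite (mem_normal_Hall sylP nPH Hy) /p_elt pnat_id.
  have y4 : (#[y]%g %% 4 = 1)%N by apply/H_1mod4/order_dvdG.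
  apply: nonresidue_diagonal_basis_anisotropic y4 (sylH y_pr r_dvd_q _) Py yy0 => //.
  by rewrite inE.
apply: (lam_nondeg Hy); apply: (lam_radical_prime_order Hy y_pr _ yy0).
exact: logn_card_structure.
Qed.

Lemma structure_Lambda0_trivial : Lambda0 H lam = 1%g.
Proof.
apply/eqP; rewrite eqEsubset andbC; apply/andP; split.
  by apply/subsetP => _ /set1P->; rewrite inE group1 (lam1l lamP).
apply/subsetP => g; rewrite inE => /andP[Hg gg0].
apply/set1P/eqP; apply: contraTT gg0 => g_neq1; rewrite -order_gt1 in g_neq1.
have [r r_pr /dvdnP[k og]] : exists2 r, prime r & (r %| #[g]%g)%N.
  by exists (pdiv #[g]%g); rewrite ?pdiv_prime ?pdiv_dvd.
have k_gt0 : (0 < k)%N by move: (order_gt0 g); rewrite og muln_gt0 => /andP[].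
have ogk : #[(g ^+ k)%g]%g = r by rewrite orderXdiv og ?dvdn_mulr // mulKn.
apply: (contra _ (no_isotropic_prime_order (groupX k Hg) _)) => [gg0|]; last first.
  by rewrite ogk.
by apply: eqQZ_trans (lamXX lamP k Hg) _; have := eqQZMn (k ^ 2) gg0; rewrite mulr0.
Qed.

End Structure.

End AbelianForm.

Local Close Scope ring_scope.

Theorem mainTheorem3 (gT : finGroupType) (H : {group gT}) (d : nat)
  (lam : gT -> gT -> rat) :
  abelian H -> #|H| = d -> odd d ->
  (forall m : nat, (m %| d)%N -> (m %% 4 != 3)%N) ->
  symmetric_bilinear_QZ H lam -> nondegenerate_QZ H lam ->
  (Lambda0 H lam = 1%g <->
   exists q' q : nat,
     [/\ prod_distinct_primes_1mod4 q', (q %| q')%N,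
         (H \isog [set: (Zmod q' * Zmod q)%type])%g &
         forall p : nat, prime p -> (p %| q)%N ->
           forall P : {group gT}, (P \in 'Syl_p(H))%g ->
           exists (g1 g2 : gT) (beta : int),
             [/\ (#[g1] = p)%g, (#[g2] = p)%g, (<[g1]> \x <[g2]> = P)%g,
                 (forall x : int, ~~ (p%:Z %| (x ^+ 2 - beta)%R)%Z) &
                 forall e1 e2 : nat,
                   eqQZ (lam (g1 ^+ e1 * g2 ^+ e2)%g (g1 ^+ e1 * g2 ^+ e2)%g)
                        (((e1 ^ 2)%:Z + beta * (e2 ^ 2)%:Z)%:~R / p%:R)%R]]).
Proof.
move=> cHH cardH d_odd d_mod4 lamP lam_nondeg.
have H_1mod4 p : p %| #|H| -> p %% 4 = 1 by rewrite cardH; apply: dvdn_mod4_eq1.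
split=> [Lambda0_1 | [q' [q [q'_sqf qq' isoH sylH]]]].
  exact: Lambda0_trivial_structure cHH lamP H_1mod4 Lambda0_1.
exact: (structure_Lambda0_trivial cHH lamP H_1mod4 lam_nondeg q'_sqf qq' isoH sylH).
Qed.
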